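(* Let $\mathcal S\in\{\mathcal C,\mathcal E\}$ and $k\ge1$. Then $$\Big(\sum_{n\ge0}\#_{\mathcal S}\{(0,0)\xrightarrow{n}(k-i,i)\}t^n\Big)_{0\le i\le k}=\sum_{(n_1,\dots,n_p)\in\mathcal C_k}t^p\,J(n_1)_{n_1+1}F_{n_1+1}\,J(n_2)_{n_1+n_2+1}F_{n_1+n_2+1}\cdots J(n_p)_{n_1+\cdots+n_p+1}F_{n_1+\cdots+n_p+1}.$$
   Context: Let $\mathbb N=\{0,1,2,\dots\}$, $\mathcal C=\{(-1,1),(0,1),(1,1),(1,0),(1,-1)\}$, $\mathcal E=\{(-1,1),(0,1),(1,1),(1,-1)\}$. For a step set $\mathcal S$, $\#_{\mathcal S}\{(0,0)\xrightarrow{n}(i,j)\}$ is the number of sequences $p_0=(0,0),p_1,\dots,p_n=(i,j)$ of points of $\mathbb N^2$ with $p_m-p_{m-1}\in\mathcal S$. $\mathcal C_k$ is the set of all ordered tuples $(n_1,\dots,n_p)$ ($p\ge1$) with each $n_r\in\{1,2\}$ and $n_1+\cdots+n_p=k$. For $n\ge2$, $F_n\in\mathcal M_{n,n}(\mathbb R(t))$ is the inverse of the $n\times n$ tridiagonal matrix with diagonal entries $1$ and entries immediately above and below the diagonal equal to $-t$; its entries are identified with their power series in $t$. For $m\ge3$, $A_m\in\mathcal M_{m-2,m}(\mathbb R)$ has entries $(A_m)_{r,r+1}=1$ ($1\le r\le m-2$) and $0$ elsewhere. For $m\ge2$, $D_m\in\mathcal M_{m-1,m}(\mathbb R)$ has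 $(D_m)_{r,r+1}=1$ and $0$ elsewhere, and $B_m\in\mathcal M_{m-1,m}(\mathbb R)$ has $(B_m)_{r,r}=(B_m)_{r,r+1}=1$ ($1\le r\le m-1$) and $0$ elsewhere. Set $J(2)_m=A_m$; $J(1)_m=B_m$ if $\mathcal S=\mathcal C$ and $J(1)_m=D_m$ if $\mathcal S=\mathcal E$. The entries of the row vector are indexed by $i=0,\dots,k$, corresponding to the point $(k-i,i)$. *)

From Stdlib Require Import FunctionalExtensionality.
From mathcomp Require Import all_boot all_order all_algebra.
Set Implicit Arguments. Unset Strict Implicit. Unset Printing Implicit Defensive.
Import Order.TTheory GRing.Theory Num.Theory.
Local Open Scope ring_scope.

Inductive stepset := SC | SE.

Definition steps (S : stepset) : seq (int * int) :=
  match S with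
  | SC => [:: (-1, 1); (0, 1); (1, 1); (1, 0); (1, -1)]
  | SE => [:: (-1, 1); (0, 1); (1, 1); (1, -1)]
  end.

(* A walk of length n is encoded by its sequence of steps (indices into the
   duplicate-free list [steps S]); p_j is the sum of the first j steps. *)
Definition walk_pos (S : stepset) (n : nat) (w : n.-tuple 'I_(size (steps S)))
  (j : nat) : int * int :=
  (\sum_(l < n | (l < j)%N) (nth (0, 0) (steps S) (tnth w l)).1,
   \sum_(l < n | (l < j)%N) (nth (0, 0) (steps S) (tnth w l)).2).

Definition nb_walks (S : stepset) (n x y : nat) : nat :=
  #|[set w : n.-tuple 'I_(size (steps S)) |
      [forall j : 'I_n.+1, (0 <= (walk_pos w j).1) && (0 <= (walk_pos w j).2)]
      && (walk_pos w n == (x%:Z, y%:Z))]|.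

(* A (m x n) matrix of power series in t, given by its coefficient sequence. *)
Definition psmx (m n : nat) := nat -> 'M[int]_(m, n).

Definition psmul m n p (A : psmx m n) (B : psmx n p) : psmx m p :=
  fun d => \sum_(j < d.+1) A j *m B (d - j)%N.

Definition pscst m n (M : 'M[int]_(m, n)) : psmx m n :=
  fun d => if d == 0%N then M else 0.

Definition psshift m n (p : nat) (A : psmx m n) : psmx m n :=
  fun d => if (p <= d)%N then A (d - p)%N else 0.

(* coefficient of t^d in entry (0,i) of a row vector (0 if out of range) *)
Definition psentry m (v : psmx 1 m) (i d : nat) : int :=
  if (insub i : option 'I_m) is Some j then v d ord0 j else 0.

Definition Tmx (n : nat) : 'M[int]_n :=
  \matrix_(i < n, j < n) (if (i == j.+1 :> nat) || (j == i.+1 :> nat) then 1 else 0).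

(* the tridiagonal matrix with 1 on the diagonal and -t off the diagonal *)
Definition Tridiag (n : nat) : psmx n n :=
  fun d => if d == 0%N then 1%:M else if d == 1%N then - Tmx n else 0.

(* F_n : its inverse, as a power series (Neumann series) *)
Definition Fps (n : nat) : psmx n n := fun d => Tmx n ^+ d.

Lemma Fps_inverse (n : nat) : psmul (Tridiag n) (Fps n) = pscst 1%:M.
Proof.
apply: functional_extensionality => d; rewrite /psmul /pscst /Tridiag /Fps.
case: d => [|d]; first by rewrite big_ord1 /= mul1mx expr0.
rewrite big_ord_recl big_ord_recl big1 /=.
  by rewrite mul1mx subn0 subSS subn0 exprS mulNmx -mulmxE addr0 subrr.
by move=> j _ /=; rewrite mul0mx.
Qed.


(* Amx m = A_{m+2} : (m) x (m+2), entries (r, r+1) (1-indexed) equal 1 *)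
Definition Amx (m : nat) : 'M[int]_(m, m.+2) :=
  \matrix_(i < m, j < m.+2) (if (j == i.+1 :> nat) then 1 else 0).
(* Dmx m = D_{m+1} : (m) x (m+1), entries (r, r+1) equal 1 *)
Definition Dmx (m : nat) : 'M[int]_(m, m.+1) :=
  \matrix_(i < m, j < m.+1) (if (j == i.+1 :> nat) then 1 else 0).
(* Bmx m = B_{m+1} : (m) x (m+1), entries (r, r) and (r, r+1) equal 1 *)
Definition Bmx (m : nat) : 'M[int]_(m, m.+1) :=
  \matrix_(i < m, j < m.+1)
    (if (j == i :> nat) || (j == i.+1 :> nat) then 1 else 0).

(* Jmx S n m = J(n)_{n+m} (an m x (n+m) matrix); junk 0 for n not in {1,2} *)
Definition Jmx (S : stepset) (n m : nat) : 'M[int]_(m, n + m) :=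
  match n return 'M[int]_(m, n + m) with
  | 1 => match S with SC => Bmx m | SE => Dmx m end
  | 2 => Amx m
  | _ => 0
  end.

Fixpoint tgt (m : nat) (s : seq nat) : nat :=
  if s is n :: s' then tgt (n + m) s' else m.

Fixpoint chainprod (S : stepset) (m : nat) (s : seq nat) :
  psmx 1 m -> psmx 1 (tgt m s) :=
  match s return psmx 1 m -> psmx 1 (tgt m s) with
  | [::] => fun v => v
  | n :: s' => fun v =>
      chainprod S s' (psmul (psmul v (pscst (Jmx S n m))) (Fps (n + m)))
  end.

Definition is_composition (k : nat) (s : seq nat) : bool :=
  [&& (0 < size s)%N, all (fun x => (x == 1) || (x == 2))%N s & sumn s == k].

(* A point (x, y) is read as entry y of the row at level x + y.  Steps
   keeping the level act on such a row by the tridiagonal matrix T, steps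
   raising it by one or two by J(1) and J(2).  Cutting a walk after its last
   step gives, coefficientwise, the recursion
     R_L(d+1) = R_L(d) T + R_(L-1)(d) J(1) + R_(L-2)(d) J(2).
   Cutting a composition before its last part n, and using F = 1 + t T F for
   the factor F contributed by that part, shows that the sum over
   compositions obeys the same recursion with the same initial values, so the
   two families of rows agree. *)

From mathcomp Require Import all_boot all_order all_algebra zify ring.
Set Implicit Arguments. Unset Strict Implicit. Unset Printing Implicit Defensive.
Import Order.TTheory GRing.Theory Num.Theory.
Local Open Scope ring_scope.

Lemma big_tuple_rcons (R : Type) (idx : R) (op : Monoid.com_law idx)
    (T : finType) (n : nat) (P : pred (n.+1.-tuple T)) (F : n.+1.-tuple T -> R) :
  \big[op/idx]_(w | P w) F w =
  \big[op/idx]_(c : T) \big[op/idx]_(w : n.-tuple T | P (rcons_tuple w c))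
     F (rcons_tuple w c).
Proof.
have rcons_bij : bijective (fun cw : T * n.-tuple T => rcons_tuple cw.2 cw.1).
  apply: inj_card_bij; last by rewrite card_prod !card_tuple expnS.
  by move=> [c w] [c' w'] /(congr1 val) /rcons_inj [/val_inj -> ->].
by rewrite pair_big_dep (reindex _ (onW_bij _ rcons_bij)).
Qed.

Definition quadrant (p : int * int) : bool := (0 <= p.1) && (0 <= p.2).

Section Walks.
Variable S : stepset.
Local Notation step := 'I_(size (steps S)).

Definition step_vec (c : step) : int * int := nth (0, 0) (steps S) c.

Definition quadrant_walk n (w : n.-tuple step) : bool :=
  [forall j : 'I_n.+1, quadrant (walk_pos w j)].

Definition nwalks (n : nat) (p : int * int) : nat :=
  #|[set w : n.-tuple step | quadrant_walk w && (walk_pos w n == p)]|.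

Lemma sum_prefix_rcons n (w : n.-tuple step) c j (F : step -> int) :
  \sum_(l < n.+1 | (l < j)%N) F (tnth (rcons_tuple w c) l) =
  \sum_(l < n | (l < j)%N) F (tnth w l) + (if (n < j)%N then F c else 0).
Proof.
rewrite big_mkcond big_ord_recr /=; congr (_ + _).
  rewrite [RHS]big_mkcond; apply: eq_bigr => l _; case: ifP => // _.
  by rewrite !(tnth_nth c) /= nth_rcons size_tuple ltn_ord.
by rewrite (tnth_nth c) /= nth_rcons size_tuple ltnn eqxx.
Qed.

Lemma walk_pos_rcons n (w : n.-tuple step) c j : (j <= n)%N ->
  walk_pos (rcons_tuple w c) j = walk_pos w j.
Proof.
move=> le_jn; rewrite /walk_pos !(sum_prefix_rcons w c j (fun c => (step_vec c).1))
  !(sum_prefix_rcons w c j (fun c => (step_vec c).2)).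
by rewrite ltnNge le_jn !addr0.
Qed.

Lemma walk_pos_rcons_last n (w : n.-tuple step) c :
  walk_pos (rcons_tuple w c) n.+1 = walk_pos w n + step_vec c.
Proof.
rewrite /walk_pos (sum_prefix_rcons w c n.+1 (fun c => (step_vec c).1))
  (sum_prefix_rcons w c n.+1 (fun c => (step_vec c).2)) ltnSn.
by congr (_ + _, _ + _); apply: eq_bigl => l; rewrite ltn_ord ltnS ltnW.
Qed.

Lemma quadrant_walk_rcons n (w : n.-tuple step) c :
  quadrant_walk (rcons_tuple w c) =
  quadrant_walk w && quadrant (walk_pos w n + step_vec c).
Proof.
apply/idP/idP => [/forallP inQ | /andP [/forallP inQ inQlast]].
  apply/andP; split; last by have := inQ ord_max; rewrite walk_pos_rcons_last.
  apply/forallP => j; have := inQ (widen_ord (leqnSn _) j).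
  by rewrite walk_pos_rcons //; exact: ltn_ord j.
apply/forallP => j; have [j_last|ne_jn] := eqVneq (j : nat) n.+1.
  by rewrite j_last walk_pos_rcons_last.
have lt_j : (j < n.+1)%N by rewrite ltn_neqAle ne_jn -ltnS ltn_ord.
by have := inQ (Ordinal lt_j); rewrite walk_pos_rcons.
Qed.

Lemma nwalks_out n p : ~~ quadrant p -> nwalks n p = 0%N.
Proof.
move=> outQ; apply: eq_card0 => w; rewrite !inE.
by apply/andP => -[/forallP /(_ ord_max) inQ /eqP endp]; rewrite -endp inQ in outQ.
Qed.

Lemma nwalks0 p : nwalks 0 p = (p == 0).
Proof.
have pos0 (w : 0.-tuple step) j : walk_pos w j = 0 by rewrite /walk_pos !big_ord0.
have inQ0 (w : 0.-tuple step) : quadrant_walk w by apply/forallP => j; rewrite pos0.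
rewrite /nwalks; have [->|ne_p0] := eqVneq p 0.
  by rewrite (eq_card (B := predT)) ?card_tuple // => w; rewrite !inE inQ0 pos0.
by apply: eq_card0 => w; rewrite !inE pos0 eq_sym (negbTE ne_p0) andbF.
Qed.

Lemma nwalksS n p : nwalks n.+1 p =
  if quadrant p then (\sum_(c <- steps S) nwalks n (p - c)%R)%N else 0%N.
Proof.
case: ifP => inQ; last by rewrite nwalks_out ?inQ.
rewrite (big_nth (0, 0)) big_mkord /nwalks -sum1dep_card big_tuple_rcons.
apply: eq_bigr => c _; rewrite sum1dep_card; apply: eq_card => w.
rewrite !inE quadrant_walk_rcons walk_pos_rcons_last -/(step_vec c).
rewrite [_ == p - _]eq_sym subr_eq eq_sym.
have [<-|_] := eqVneq p (walk_pos w n + step_vec c); last by rewrite !andbF.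
by rewrite inQ !andbT.
Qed.
End Walks.

Definition rowentry m (u : 'rV[int]_m) (i : nat) : int :=
  if (insub i : option 'I_m) is Some j then u ord0 j else 0.

Definition shiftr (f : nat -> int) (i : nat) : int :=
  if i is i'.+1 then f i' else 0.

Lemma eq_shiftr (f g : nat -> int) i : f =1 g -> shiftr f i = shiftr g i.
Proof. by move=> fg; case: i => [|i] //=; rewrite fg. Qed.

Lemma psentryE m (v : psmx 1 m) i d : psentry v i d = rowentry (v d) i.
Proof. by []. Qed.

Lemma rowentry_ord m (u : 'rV[int]_m) (j : 'I_m) : rowentry u j = u ord0 j.
Proof. by rewrite /rowentry valK. Qed.

Lemma rowentry_out m (u : 'rV[int]_m) i : (m <= i)%N -> rowentry u i = 0.
Proof. by move=> le_mi; rewrite /rowentry insubF // ltnNge le_mi. Qed.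

Lemma rowentryD m (u w : 'rV[int]_m) i :
  rowentry (u + w) i = rowentry u i + rowentry w i.
Proof. by rewrite /rowentry; case: insub => [j|]; rewrite ?mxE ?addr0. Qed.

Lemma sum_row_pred1 m (u : 'rV[int]_m) (k : nat) :
  \sum_(j < m | (j : nat) == k) u ord0 j = rowentry u k.
Proof.
rewrite /rowentry; case: insubP => [j _ <-|out_k].
  by apply: big_pred1 => j'; rewrite /= val_eqE.
by rewrite big_pred0 // => j; apply: contraNF out_k => /eqP <-.
Qed.

Lemma sum_row_predS m (u : 'rV[int]_m) (i : nat) :
  \sum_(j < m | i == j.+1) u ord0 j = shiftr (rowentry u) i.
Proof.
case: i => [|i]; first by rewrite big_pred0.
by rewrite /= -sum_row_pred1; apply: eq_bigl => j; rewrite eqSS eq_sym.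
Qed.

Lemma rowentry_mul01 m n (u : 'rV[int]_m) (r : nat -> nat -> bool) (k : 'I_n) :
  rowentry (u *m \matrix_(j < m, l < n) (if r j l then 1 else 0)) k =
  \sum_(j < m | r j k) u ord0 j.
Proof.
rewrite rowentry_ord mxE [RHS]big_mkcond; apply: eq_bigr => j _.
by rewrite mxE; case: ifP; rewrite ?mulr1 ?mulr0.
Qed.

Lemma rowentry_mulD m (u : 'rV[int]_m) i :
  rowentry (u *m Dmx m) i = shiftr (rowentry u) i.
Proof.
have [lt_i|ge_i] := ltnP i m.+1.
  rewrite -[i]/(nat_of_ord (Ordinal lt_i)).
  by rewrite (rowentry_mul01 _ (fun j l => l == j.+1)) sum_row_predS.
by case: i ge_i => // i ge_i; rewrite /= !rowentry_out.
Qed.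

Lemma rowentry_mulA m (u : 'rV[int]_m) i :
  rowentry (u *m Amx m) i = shiftr (rowentry u) i.
Proof.
have [lt_i|ge_i] := ltnP i m.+2.
  rewrite -[i]/(nat_of_ord (Ordinal lt_i)).
  by rewrite (rowentry_mul01 _ (fun j l => l == j.+1)) sum_row_predS.
by case: i ge_i => // i ge_i; rewrite /= !rowentry_out // ltnW.
Qed.

Lemma sum_row_orb m (u : 'rV[int]_m) (a b : pred nat) :
  (forall j, ~~ (a j && b j)) ->
  \sum_(j < m | a j || b j) u ord0 j =
  \sum_(j < m | a j) u ord0 j + \sum_(j < m | b j) u ord0 j.
Proof.
move=> disj; rewrite big_mkcond [X in _ = X + _]big_mkcond.
rewrite [X in _ = _ + X]big_mkcond -big_split; apply: eq_bigr => j _ /=.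
by have := disj j; case: (a j); case: (b j); rewrite ?addr0 ?add0r.
Qed.

Lemma rowentry_mulB m (u : 'rV[int]_m) i :
  rowentry (u *m Bmx m) i = rowentry u i + shiftr (rowentry u) i.
Proof.
have [lt_i|ge_i] := ltnP i m.+1; last first.
  by case: i ge_i => [|i] ge_i; rewrite /= !rowentry_out // ltnW.
rewrite -[i]/(nat_of_ord (Ordinal lt_i)).
rewrite (rowentry_mul01 _ (fun j l => (l == j) || (l == j.+1))) /=.
rewrite (@sum_row_orb _ _ (fun j => i == j) (fun j => i == j.+1)); last first.
  by move=> j; apply/negP => /andP [/eqP -> /eqP]; lia.
rewrite sum_row_predS -sum_row_pred1; congr (_ + _).
by apply: eq_bigl => j; rewrite eq_sym.
Qed.

Lemma rowentry_mulT N (u : 'rV[int]_N) i : (i < N)%N ->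
  rowentry (u *m Tmx N) i = shiftr (rowentry u) i + rowentry u i.+1.
Proof.
move=> lt_i; rewrite -[i]/(nat_of_ord (Ordinal lt_i)).
rewrite (rowentry_mul01 _ (fun j l => (j == l.+1) || (l == j.+1))) /=.
rewrite (@sum_row_orb _ _ (fun j => j == i.+1) (fun j => i == j.+1)); last first.
  by move=> j; apply/negP => /andP [/eqP -> /eqP]; lia.
by rewrite addrC sum_row_predS -sum_row_pred1.
Qed.

Definition Jrow (S : stepset) (n : nat) (f : nat -> int) (i : nat) : int :=
  match n, S with
  | 1, SC => f i + shiftr f i
  | _, _ => shiftr f i
  end.
Arguments Jrow : simpl never.

Lemma rowentry_mulJ S n m (u : 'rV[int]_m) i : (n == 1)%N || (n == 2)%N ->
  rowentry (u *m Jmx S n m) i = Jrow S n (rowentry u) i.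
Proof.
case: n => [|[|[|n]]] //= _; last exact: rowentry_mulA.
by case: S; [exact: rowentry_mulB | exact: rowentry_mulD].
Qed.

Lemma eq_Jrow S n (f g : nat -> int) i : f =1 g -> Jrow S n f i = Jrow S n g i.
Proof.
by move=> fg; rewrite /Jrow /shiftr; case: i => [|i]; case: n => [|[|n]]; case: S; rewrite ?fg.
Qed.

Lemma Jrow0 S n i : Jrow S n (fun=> 0) i = 0.
Proof.
by rewrite /Jrow /shiftr; case: i => [|i]; case: n => [|[|n]]; case: S; rewrite ?addr0.
Qed.

Lemma psmul_cst m n p (v : psmx m n) (M : 'M[int]_(n, p)) d :
  psmul v (pscst M) d = v d *m M.
Proof.
rewrite /psmul /pscst big_ord_recr /= subnn eqxx big1 ?add0r // => j _.
by rewrite subn_eq0 leqNgt ltn_ord mulmx0.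
Qed.

Lemma psmulF0 m N (w : psmx m N) : psmul w (Fps N) 0 = w 0%N.
Proof. by rewrite /psmul big_ord1 /Fps expr0 mulmx1. Qed.

Lemma psmulFS m N (w : psmx m N) d :
  psmul w (Fps N) d.+1 = w d.+1 + psmul w (Fps N) d *m Tmx N.
Proof.
rewrite /psmul big_ord_recr /= subnn /Fps expr0 mulmx1 addrC; congr (_ + _).
rewrite mulmx_suml; apply: eq_bigr => j _.
rewrite -mulmxA subSn; last by rewrite -ltnS.
by rewrite exprSr.
Qed.

Lemma psentry_shift m (v : psmx 1 m) p i d :
  psentry (psshift p v) i d = if (p <= d)%N then psentry v i (d - p) else 0.
Proof. by rewrite /psentry /psshift; case: insub => [j|]; case: ifP; rewrite ?mxE. Qed.

Lemma tgt_sumn m s : tgt m s = (sumn s + m)%N.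
Proof. by elim: s m => [|n s IHs] m //=; rewrite IHs addnCA addnA. Qed.

Lemma chainprod_rcons S s n m (v : psmx 1 m) i d :
  psentry (chainprod S (rcons s n) v) i d =
  psentry (psmul (psmul (chainprod S s v) (pscst (Jmx S n (tgt m s))))
                 (Fps (n + tgt m s))) i d.
Proof. by elim: s m v => [|a s IHs] m v //=; rewrite IHs. Qed.

Definition compterm S (s : seq nat) (i d : nat) : int :=
  psentry (psshift (size s) (chainprod S s (pscst (1%:M : 'M[int]_1)))) i d.

Lemma compterm_nil S i d : compterm S [::] i d = ((i == 0%N) && (d == 0%N))%:R.
Proof.
rewrite /compterm psentry_shift subn0 psentryE /pscst.
case: d => [|d] /=; last by rewrite andbF /rowentry; case: insub => [j|]; rewrite ?mxE.
case: i => [|i]; last by rewrite rowentry_out.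
by rewrite /rowentry insubT /= mxE.
Qed.

Lemma compterm_out S s i d : (sumn s < i)%N -> compterm S s i d = 0.
Proof. by move=> lt_si; rewrite /compterm psentryE rowentry_out // tgt_sumn addn1. Qed.

Lemma compterm_early S s i d : (d < size s)%N -> compterm S s i d = 0.
Proof. by move=> lt_ds; rewrite /compterm psentry_shift leqNgt lt_ds. Qed.

Lemma compterm_rconsS S s n i d :
  (n == 1)%N || (n == 2)%N -> (i <= sumn s + n)%N ->
  compterm S (rcons s n) i d.+1 =
  Jrow S n (compterm S s ^~ d) i + shiftr (compterm S (rcons s n) ^~ d) i
  + compterm S (rcons s n) i.+1 d.
Proof.
move=> Jn le_i; set C := chainprod S s (pscst 1%:M).
set W := psmul (psmul C (pscst (Jmx S n (tgt 1 s)))) (Fps (n + tgt 1 s)).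
have lastE j e : compterm S (rcons s n) j e =
    if (size s < e)%N then rowentry (W (e - (size s).+1)%N) j else 0.
  by rewrite /compterm psentry_shift size_rcons chainprod_rcons.
have prefixE j e : compterm S s j e =
    if (size s <= e)%N then rowentry (C (e - size s)%N) j else 0.
  by rewrite /compterm psentry_shift.
have [lt_ds|le_sd] := ltnP d (size s).
  have zero_s : compterm S s ^~ d =1 fun=> 0.
    by move=> j; rewrite prefixE leqNgt lt_ds.
  have zero_r : compterm S (rcons s n) ^~ d =1 fun=> 0.
    by move=> j; rewrite lastE ltnNge ltnW.
  rewrite (eq_Jrow _ _ _ zero_s) Jrow0 (eq_shiftr _ zero_r) zero_r.
  rewrite lastE ltnS leqNgt lt_ds.
  by rewrite /shiftr; case: i {le_i} => [|i]; rewrite !addr0.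
rewrite -(subnKC le_sd); move: (d - size s)%N => e.
rewrite (@eq_Jrow _ _ _ (rowentry (C e))); last first.
  by move=> j; rewrite prefixE leq_addr addKn.
rewrite lastE ltnS leq_addr subSS addKn.
case: e => [|e].
  have zero_r : compterm S (rcons s n) ^~ (size s + 0)%N =1 fun=> 0.
    by move=> j; rewrite lastE addn0 ltnn.
  rewrite (eq_shiftr _ zero_r) zero_r /W psmulF0 psmul_cst rowentry_mulJ //.
  by rewrite /shiftr; case: i {le_i} => [|i]; rewrite !addr0.
rewrite (@eq_shiftr _ (rowentry (W e))); last first.
  by move=> j; rewrite lastE addnS ltnS leq_addr subSS addKn.
rewrite lastE addnS ltnS leq_addr subSS addKn /W psmulFS rowentryD psmul_cst.
rewrite rowentry_mulJ // rowentry_mulT ?addrA // tgt_sumn; lia.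
Qed.

Definition parts (t : seq 'I_2) : seq nat := [seq (val x).+1 | x <- t].

(* Unlike C_L, this also counts the empty composition of 0, which starts the
   recursion; a composition of L has at most L parts. *)
Definition compsum (L : nat) (F : seq nat -> int) : int :=
  \sum_(p < L.+1) \sum_(t : p.-tuple 'I_2 | sumn (parts t) == L) F (parts t).

Lemma size_le_sumn_parts (t : seq 'I_2) : (size t <= sumn (parts t))%N.
Proof. by elim: t => //= x t IHt; rewrite -addn1 addnC leq_add. Qed.

Lemma compsum_widen P L F : (L < P)%N ->
  \sum_(p < P) \sum_(t : p.-tuple 'I_2 | sumn (parts t) == L) F (parts t) =
  compsum L F.
Proof.
move=> lt_LP; rewrite /compsum.
rewrite (big_ord_widen P (fun p => \sum_(t : p.-tuple 'I_2 | sumn (parts t) == L)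
                                     F (parts t)) lt_LP).
rewrite [RHS]big_mkcond; apply: eq_bigr => p _; case: ltnP => // le_Lp.
rewrite big_pred0 // => t; apply: contraTF le_Lp => /eqP sum_t.
by rewrite -ltnNge ltnS -sum_t -{1}(size_tuple t) size_le_sumn_parts.
Qed.

Lemma compsum_nil F : compsum 0 F = F [::].
Proof. by rewrite /compsum big_ord1 (big_pred1 [tuple]) // => t; rewrite tuple0. Qed.

Lemma compsum_rcons L F : (0 < L)%N ->
  compsum L F =
  \sum_(x < 2 | (x < L)%N) compsum (L - x.+1) (fun s => F (rcons s x.+1)).
Proof.
move=> L_gt0; rewrite {1}/compsum big_ord_recl big_pred0 ?add0r; last first.
  by move=> t; rewrite tuple0; apply/negbTE; rewrite eq_sym -lt0n.
under eq_bigr => p _ do rewrite big_tuple_rcons.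
rewrite exchange_big [RHS]big_mkcond; apply: eq_bigr => x _ /=.
case: ltnP => [lt_xL|le_Lx]; last first.
  rewrite big1 // => p _; rewrite big_pred0 // => t.
  rewrite /parts map_rcons sumn_rcons; apply: contraTF le_Lx => /eqP <-.
  by rewrite -ltnNge addnS ltnS; apply: leq_addl.
rewrite -(compsum_widen (P := L)); last by rewrite ltn_subLR // addSn ltnS leq_addl.
apply: eq_bigr => p _; apply: eq_big => [t|t _]; rewrite /parts map_rcons ?sumn_rcons //.
by rewrite (_ : \val x = x) //; apply/eqP/eqP; lia.
Qed.

Lemma eq_compsum L F G :
  (forall s, sumn s = L -> F s = G s) -> compsum L F = compsum L G.
Proof. by move=> FG; apply: eq_bigr => p _; apply: eq_bigr => t /eqP /FG. Qed.

Lemma compsumD L F G :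
  compsum L (fun s => F s + G s) = compsum L F + compsum L G.
Proof. by rewrite /compsum -big_split; apply: eq_bigr => p _; rewrite big_split. Qed.

Lemma compsum0 L : compsum L (fun=> 0) = 0.
Proof. by rewrite /compsum big1 // => p _; rewrite big1. Qed.

Lemma compsum_shiftr L (F : seq nat -> nat -> int) i :
  compsum L (fun s => shiftr (F s) i) = shiftr (fun j => compsum L (F ^~ j)) i.
Proof. by case: i => [|i]; rewrite ?compsum0. Qed.

Lemma compsum_Jrow S n L (F : seq nat -> nat -> int) i :
  compsum L (fun s => Jrow S n (F s) i) = Jrow S n (fun j => compsum L (F ^~ j)) i.
Proof.
rewrite /Jrow -compsum_shiftr.
by case: n => [|[|n]] //; case: S => //; rewrite compsumD compsum_shiftr.
Qed.

Definition compgf S L i d : int := compsum L (fun s => compterm S s i d).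

Lemma compgf_out S L i d : (L < i)%N -> compgf S L i d = 0.
Proof.
move=> lt_Li; rewrite -(compsum0 L); apply: eq_compsum => s sum_s.
by rewrite compterm_out ?sum_s.
Qed.

Lemma compgf0 S L i : compgf S L i 0 = ((L == 0%N) && (i == 0%N))%:R.
Proof.
case: L => [|L]; first by rewrite /compgf compsum_nil compterm_nil andbT.
rewrite /compgf compsum_rcons // big1 // => x _.
rewrite -(compsum0 (L.+1 - x.+1)); apply: eq_compsum => s _.
by rewrite compterm_early // size_rcons.
Qed.

Lemma compgfS S L i d : (i <= L)%N ->
  compgf S L i d.+1 = shiftr (compgf S L ^~ d) i + compgf S L i.+1 d
    + \sum_(x < 2 | (x < L)%N) Jrow S x.+1 (compgf S (L - x.+1) ^~ d) i.
Proof.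
case: L => [|L] le_iL.
  rewrite big_pred0 // /compgf !compsum_nil !compterm_nil.
  by case: i le_iL.
rewrite /compgf -compsum_shiftr !(@compsum_rcons L.+1 _ erefl) -!big_split /=.
apply: eq_bigr => x lt_xL; rewrite -compsum_Jrow -!compsumD.
apply: eq_compsum => s sum_s; rewrite compterm_rconsS; first by rewrite [RHS]addrC addrA.
  by case: x {lt_xL sum_s} => [[|[|]]].
by rewrite sum_s subnK.
Qed.

Definition compgf_lvl S d (L i : int) : int :=
  if (0 <= i) && (i <= L) then compgf S `|L| `|i| d else 0.

Lemma compgf_lvl_nat S d (L i : nat) : compgf_lvl S d L%:Z i%:Z = compgf S L i d.
Proof.
by rewrite /compgf_lvl lez_nat; case: leqP => // lt_Li; rewrite compgf_out.
Qed.

Lemma compgf_lvl_pred S d (L i : nat) :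
  compgf_lvl S d L%:Z (i%:Z - 1) = shiftr (compgf S L ^~ d) i.
Proof.
case: i => [|i] /=; first by rewrite /compgf_lvl.
by rewrite -compgf_lvl_nat; congr compgf_lvl; lia.
Qed.

Lemma compgf_lvl_succ S d (L i : nat) :
  compgf_lvl S d L%:Z (i%:Z + 1) = compgf S L i.+1 d.
Proof. by rewrite -compgf_lvl_nat; congr compgf_lvl; lia. Qed.

Lemma compgf_lvl_sub S d (L n : nat) v :
  compgf_lvl S d (L%:Z - n%:Z) v =
  if (n <= L)%N then compgf_lvl S d (L - n)%N v else 0.
Proof.
case: leqP => [le_nL|lt_Ln]; first by rewrite subzn.
by rewrite /compgf_lvl; case: ifP => //; lia.
Qed.

Definition compgf_at S d (p : int * int) : int := compgf_lvl S d (p.1 + p.2) p.2.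

Lemma compgf_at_out S d p : ~~ quadrant p -> compgf_at S d p = 0.
Proof. by rewrite /compgf_at /compgf_lvl /quadrant; case: ifP => //; lia. Qed.

Lemma compgf_atS S d p : compgf_at S d.+1 p =
  if quadrant p then \sum_(c <- steps S) compgf_at S d (p - c) else 0.
Proof.
case: ifP => [|/negbT]; last exact: compgf_at_out.
case: p => -[x|x] -[y|y] //= _.
rewrite {1}/compgf_at /= -PoszD compgf_lvl_nat compgfS ?leq_addl //.
rewrite big_mkcond !big_ord_recl big_ord0 /= /bump /= addn0 addr0.
set L := (x + y)%N.
have nw_step : compgf_at S d ((x%:Z, y%:Z) - (-1, 1)) = shiftr (compgf S L ^~ d) y.
  by rewrite /compgf_at /= (_ : _ + _ = L%:Z) ?compgf_lvl_pred //; lia.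
have se_step : compgf_at S d ((x%:Z, y%:Z) - (1, -1)) = compgf S L y.+1 d.
  by rewrite /compgf_at /= (_ : _ + _ = L%:Z) opprK ?compgf_lvl_succ //; lia.
have n_step : compgf_at S d ((x%:Z, y%:Z) - (0, 1)) =
    if (0 < L)%N then shiftr (compgf S (L - 1) ^~ d) y else 0.
  rewrite /compgf_at /= (_ : _ + _ = L%:Z - 1%:Z); last by lia.
  by rewrite compgf_lvl_sub compgf_lvl_pred.
have ne_step : compgf_at S d ((x%:Z, y%:Z) - (1, 1)) =
    if (1 < L)%N then shiftr (compgf S (L - 2) ^~ d) y else 0.
  rewrite /compgf_at /= (_ : _ + _ = L%:Z - 2%:Z); last by lia.
  by rewrite compgf_lvl_sub compgf_lvl_pred.
have e_step : compgf_at S d ((x%:Z, y%:Z) - (1, 0)) =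
    if (0 < L)%N then compgf S (L - 1) y d else 0.
  rewrite /compgf_at /= subr0 (_ : _ + _ = L%:Z - 1%:Z); last by lia.
  by rewrite compgf_lvl_sub compgf_lvl_nat.
move: nw_step se_step n_step ne_step e_step.
case: S => nw se n ne e; rewrite /steps !big_cons big_nil addr0 nw se n ne ?e /Jrow;
  by case: (0 < L)%N; case: (1 < L)%N; rewrite ?addr0 ?add0r; ring.
Qed.

Lemma compgf_at0 S p : compgf_at S 0 p = (p == 0)%:R.
Proof.
have [inQ|outQ] := boolP (quadrant p); last first.
  by rewrite compgf_at_out //; case: eqP outQ => // ->.
case: p inQ => -[x|x] -[y|y] //= _.
rewrite /compgf_at /= -PoszD compgf_lvl_nat compgf0 xpair_eqE !eqz_nat.
by rewrite addn_eq0 -andbA andbb.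
Qed.

Lemma nwalks_compgf_at S d p : (nwalks S d p)%:Z = compgf_at S d p.
Proof.
elim: d p => [|d IHd] p; first by rewrite nwalks0 compgf_at0; case: (p == 0).
rewrite nwalksS compgf_atS; case: ifP => // _.
by rewrite -natz natr_sum; apply: eq_bigr => c _; rewrite natz IHd.
Qed.

Lemma is_composition_parts k (t : seq 'I_2) : (0 < k)%N ->
  is_composition k (parts t) = (sumn (parts t) == k).
Proof.
move=> k_gt0; rewrite /is_composition.
case: eqP => [sum_t|]; rewrite ?andbF ?andbT //.
apply/andP; split; first by case: t sum_t => //= sum0; rewrite -sum0 in k_gt0.
by apply/allP => _ /mapP [x _ ->]; case: x => -[|[|]].
Qed.

Theorem proposition2p11 (S : stepset) (k : nat) :
  (1 <= k)%N ->
  forall i : nat, (i <= k)%N ->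
  forall d : nat,
    (nb_walks S d (k - i) i)%:Z =
    \sum_(p < k.+1)
      \sum_(t : p.-tuple 'I_2 | is_composition k [seq (val x).+1 | x <- t])
        psentry (psshift p (chainprod S [seq (val x).+1 | x <- t]
                                       (pscst (1%:M : 'M[int]_1)))) i d.
Proof.
move=> k_gt0 i le_ik d.
rewrite (_ : nb_walks S d (k - i) i = nwalks S d ((k - i)%:Z, i%:Z)) //.
rewrite nwalks_compgf_at /compgf_at /= -PoszD subnK // compgf_lvl_nat.
apply: eq_bigr => p _; apply: eq_big => [t|t _]; first by rewrite is_composition_parts.
by rewrite /compterm size_map size_tuple.
Qed.
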